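(* There exist a compact Hausdorff abelian group $G$ and Čech-analytic sets $A,B\subset G$ such that $A+B$ is not Čech-analytic.
   Context: Let $X$ be a compact Hausdorff space. A set $A\subset X$ is Čech-analytic if $A$ is the projection onto $X$ of a subset of $X\times\mathbb{N}^{\mathbb{N}}$ that is the intersection of a closed set with a $G_\delta$ set (here $\mathbb{N}^{\mathbb{N}}$ carries the product topology). *)

From HB Require Import structures.
From mathcomp Require Import all_boot all_algebra.
From mathcomp Require Import all_classical all_reals all_analysis.
From mathcomp Require Import borel_hierarchy.
Import GRing.Theory.
Local Open Scope classical_set_scope.
Local Open Scope ring_scope.

(* Baire space N^N: {ptws nat -> nat} = product topology of discrete nat. *)

Definition cech_analytic {X : topologicalType} (A : set X) : Prop :=
  exists (C S : set (X * {ptws nat -> nat})),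
    closed C /\ Gdelta S /\ A = fst @` (C `&` S).

Definition sumset {G : zmodType} (A B : set G) : set G :=
  [set a + b | a in A & b in B].

(* Every Čech-analytic subset of the Cantor space 2^N is the projection of a
   (closed ∩ G_δ) subset of 2^N × N^N, a space with a countable base of
   cylinders, so it is coded by a point c of 2^N; hence the diagonal set
   D = {c | c is not in the set coded by c} is not Čech-analytic.
   In G = 2^(2^N × N), which has continuum many coordinates, any D gives an
   open set: the x flagging some r ∈ D at the coordinate (r, 0). Intersecting
   it with the closed set of x that flag at most one r and whose rows
   x(_, n+1) all spell the flagged r, and doing the same with zero rows and
   no restriction on r, yields (closed ∩ open) sets A and B. Embedding 2^N
   into G as constant rows is continuous and pulls A + B back to D, and
   continuous preimages of Čech-analytic sets are Čech-analytic. *)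

From HB Require Import structures.
From mathcomp Require Import all_boot all_algebra.
From mathcomp Require Import all_classical all_reals all_analysis.
From mathcomp Require Import borel_hierarchy.
Import GRing.Theory.
Local Open Scope classical_set_scope.
Local Open Scope ring_scope.

(* The topology of the index type I plays no role; [pointwise_cvgP] needs one. *)
Lemma ptws_discrete_cvgP {I : topologicalType} {V : discreteUniformType}
    (F : set_system {ptws I -> V}) (f : {ptws I -> V}) :
  Filter F -> F --> f <-> forall i, \forall g \near F, g i = f i.
Proof.
move=> FF; rewrite pointwise_cvgP; split=> Ff i.
  exact: Ff i [set f i] (discrete_set1 _).
exact: cvg_near_cst (Ff i).
Qed.

Lemma near_ptws_coord {I : topologicalType} {V : discreteUniformType}
    (f : {ptws I -> V}) (i : I) : \forall g \near f, g i = f i.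
Proof. exact: (ptws_discrete_cvgP (nbhs f) f _).1 cvg_id i. Qed.

Lemma ptws_discrete_continuous {T I : topologicalType} {V : discreteUniformType}
    (h : T -> {ptws I -> V}) :
  (forall x i, \forall y \near x, h y i = h x i) -> continuous h.
Proof.
by move=> hloc x; apply/(proj2 (ptws_discrete_cvgP _ _ _)); exact: hloc.
Qed.

Definition cantor_cube (I : topologicalType) := {ptws I -> bool}.
HB.instance Definition _ I := Topological.copy (cantor_cube I) {ptws I -> bool}.
HB.instance Definition _ I := GRing.Zmodule.copy (cantor_cube I) (I -> bool).

Lemma cantor_cube_sub_continuous I :
  continuous (fun x : cantor_cube I * cantor_cube I => x.1 - x.2).
Proof.
apply: ptws_discrete_continuous => x i.
have e1 : \forall z \near x, z.1 i = x.1 i.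
  exact: cvg_fst (near_ptws_coord _ _).
have e2 : \forall z \near x, z.2 i = x.2 i.
  exact: cvg_snd (near_ptws_coord _ _).
apply: (filterS2 _ _ e1 e2) => z e1z e2z.
by change (z.1 i - z.2 i = x.1 i - x.2 i); rewrite e1z e2z.
Qed.

Lemma cantor_cube_addE I (a b : cantor_cube I) i : (a + b) i = a i + b i.
Proof. by []. Qed.

HB.instance Definition _ I :=
  PreTopologicalNmodule_isTopologicalZmodule.Build (cantor_cube I)
    (@cantor_cube_sub_continuous I).

Lemma cantor_cube_compact I : compact [set: cantor_cube I].
Proof.
have := @tychonoff I (fun=> bool) (fun=> setT) (fun=> bool_compact).
by congr compact; apply/seteqP.
Qed.

Lemma cantor_cube_hausdorff I : hausdorff_space (cantor_cube I).
Proof.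
exact: (@hausdorff_product I (fun=> bool) (fun=> discrete_hausdorff)).
Qed.

Lemma cech_analytic_closedI_open {X : topologicalType} (C U : set X) :
  closed C -> open U -> cech_analytic (C `&` U).
Proof.
move=> cC oU.
have fst_cont : continuous (@fst X {ptws nat -> nat}).
  by move=> ?; exact: cvg_fst.
exists (fst @^-1` C), (fst @^-1` U); split; [|split].
- by apply: closed_comp cC => ? _; exact: fst_cont.
- by apply: open_Gdelta; apply: open_comp oU => ? _; exact: fst_cont.
- apply/seteqP; split => [x CUx|_ [[x s] CUx <-] //].
  by exists (x, fun=> 0%N).
Qed.

Lemma cech_analytic_preimage {X Y : topologicalType} (f : X -> Y) (A : set Y) :
  continuous f -> cech_analytic A -> cech_analytic (f @^-1` A).
Proof.
move=> fcont [C [S [cC [[F oF ->] ->]]]].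
pose g (z : X * {ptws nat -> nat}) := (f z.1, z.2).
have gcont : continuous g.
  move=> [x s].
  apply: (@cvg_pair _ _ _ _ (nbhs (f x)) (nbhs s) _ _ _ (f \o fst) snd).
    by apply: continuous_comp; [exact: cvg_fst|exact: fcont].
  exact: cvg_snd.
exists (g @^-1` C), (\bigcap_i g @^-1` F i); split; [|split].
- by apply: closed_comp cC => ? _; exact: gcont.
- exists (fun i => g @^-1` F i) => // i.
  by apply: open_comp (oF i) => ? _; exact: gcont.
- apply/seteqP; split => [x [[y s] [Cys Fys] /= fxy]|x [[x' s] [Cxs Fxs] <-]].
    by exists (x, s) => //; split=> [|i _]; rewrite /g /= -fxy //; exact: Fys.
  by exists (g (x', s)) => //; split => // i _; exact: Fxs.
Qed.

Section codes.
Context {Z : topologicalType} (b : nat -> set Z).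
Hypothesis open_bigcup_base :
  forall U, open U -> U = \bigcup_(k in [set k | b k `<=` U]) b k.

Definition coded_open (c : nat -> bool) : set Z :=
  \bigcup_(k in [set k | c k]) b k.

Definition open_code (U : set Z) (k : nat) : bool := `[< b k `<=` U >].

Lemma coded_open_code U : open U -> coded_open (open_code U) = U.
Proof.
move=> oU; rewrite [RHS]open_bigcup_base //; apply: eq_bigcupl.
by split => k /asboolP.
Qed.

Definition code_row (c : nat -> bool) (i n : nat) : bool := c (pickle (i, n)).

Definition code_of_rows (cs : nat -> nat -> bool) (k : nat) : bool :=
  if unpickle k is Some (i, n) then cs i n else false.

Lemma code_of_rowsK cs i : code_row (code_of_rows cs) i = cs i.
Proof. by apply: funext => n; rewrite /code_row /code_of_rows pickleK. Qed.

Definition coded_closedIGdelta (c : nat -> bool) : set Z :=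
  ~` coded_open (code_row c 0) `&` \bigcap_i coded_open (code_row c i.+1).

Lemma closedIGdelta_coded {C S : set Z} :
  closed C -> Gdelta S -> exists c, C `&` S = coded_closedIGdelta c.
Proof.
move=> cC [F oF ->].
exists (code_of_rows (fun i => open_code (if i is i'.+1 then F i' else ~` C))).
rewrite /coded_closedIGdelta !code_of_rowsK coded_open_code ?setCK //.
  congr (_ `&` _); apply: eq_bigcapr => i _.
  by rewrite code_of_rowsK coded_open_code.
exact: closed_openC.
Qed.

End codes.

Section cylinders.
Context {T1 T2 : discreteUniformType}.
Local Notation Z := ({ptws nat -> T1} * {ptws nat -> T2})%type.

Definition cylinder (m : nat) (z : Z) : set Z :=
  [set z' | forall i, (i < m)%N -> z'.1 i = z.1 i /\ z'.2 i = z.2 i].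

Lemma cylinder_sub_open (U : set Z) z :
  open U -> U z -> exists m, cylinder m z `<=` U.
Proof.
move=> oU Uz; apply/not_existsP => no_cyl.
have /choice[w wP] m : exists z', cylinder m z z' /\ ~ U z'.
  by have /existsNP[z' /not_implyP] := no_cyl m; exists z'.
have w_near i : \forall m \near \oo, (w m).1 i = z.1 i /\ (w m).2 i = z.2 i.
  by near=> m; apply: (wP m).1; near: m; exact: nbhs_infty_gt.
have wz : w @ \oo --> z.
  rewrite (_ : w = fun m => ((w m).1, (w m).2)); last first.
    by apply: funext => m; case: (w m).
  case: z {Uz no_cyl wP} w_near => z1 z2 w_near.
  apply: (@cvg_pair _ _ _ _ (nbhs z1) (nbhs z2)); apply/ptws_discrete_cvgP => i;
    by apply: filterS (w_near i) => m [].
have Uw : \forall m \near \oo, U (w m) by apply: wz; exact: open_nbhs_nbhs.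
near \oo => m; apply: (wP m).2; near: m; exact: Uw.
Unshelve. all: by end_near.
Qed.

End cylinders.

Local Notation baire_space := {ptws nat -> nat}.

Definition cylinder_code (k : nat) : set (cantor_space * baire_space) :=
  if (unpickle k : option (nat * seq bool * seq nat)) is Some (m, s, t)
  then cylinder m (nth false s, nth 0%N t) else set0.

Lemma open_bigcup_cylinder_code (U : set (cantor_space * baire_space)) :
  open U -> U = \bigcup_(k in [set k | cylinder_code k `<=` U]) cylinder_code k.
Proof.
move=> oU; apply/seteqP; split => [z Uz|z [k /= + ck]]; last exact.
have [m zmU] := cylinder_sub_open _ _ oU Uz.
pose k := pickle (m, mkseq z.1 m, mkseq z.2 m).
have cyl_code : cylinder_code k = cylinder m z.
  rewrite /cylinder_code pickleK; apply/seteqP; split => z' /= z'm i im;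
    by move: (z'm i im) => /=; rewrite !nth_mkseq.
by exists k; rewrite /= cyl_code.
Qed.

Definition coded_analytic (c : cantor_space) : set cantor_space :=
  fst @` coded_closedIGdelta cylinder_code c.

Lemma cech_analytic_coded (A : set cantor_space) :
  cech_analytic A -> exists c, A = coded_analytic c.
Proof.
move=> [C [S [cC [GS ->]]]].
have [c ->] := closedIGdelta_coded _ open_bigcup_cylinder_code cC GS.
by exists c.
Qed.

Lemma diagonal_not_cech_analytic :
  ~ cech_analytic [set r : cantor_space | ~ coded_analytic r r].
Proof.
move=> /cech_analytic_coded[c /(congr1 (@^~ c)) /= e].
have [to_cc from_cc] : ~ coded_analytic c c <-> coded_analytic c c by rewrite e.
have notcc : ~ coded_analytic c c := fun h => from_cc h h.
exact: notcc (to_cc notcc).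
Qed.

Local Notation G := (cantor_cube (cantor_space * nat)%type).

Definition cube_embed (y : cantor_space) : G :=
  fun k => if k.2 is n.+1 then y n else false.

Lemma cube_embed_continuous : continuous cube_embed.
Proof.
apply: ptws_discrete_continuous => y [w [|n]]; first by apply: filterE.
exact: near_ptws_coord.
Qed.

Definition encodes (f : cantor_space -> nat -> bool) : set G :=
  [set x : G | (forall r s, x (r, 0%N) -> x (s, 0%N) -> r = s) /\
           (forall r w n, x (r, 0%N) -> (x (w, n.+1) : bool) = f r n)].

Definition flags_in (S : set cantor_space) : set G :=
  [set x : G | exists2 r, S r & x (r, 0%N)].

Lemma closed_encodes f : closed (encodes f).
Proof.
move=> x /= xcl; split.
- move=> r s.
  have [g [[g_unique _] [<- <-]]] :=
    xcl _ (filterI (near_ptws_coord x (r, 0%N)) (near_ptws_coord x (s, 0%N))).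
  exact: g_unique.
- move=> r w n.
  have [g [[_ g_rows] [<- <-]]] :=
    xcl _ (filterI (near_ptws_coord x (r, 0%N)) (near_ptws_coord x (w, n.+1))).
  exact: g_rows.
Qed.

Lemma open_flags_in S : open (flags_in S).
Proof.
rewrite openE => x [r Sr xr].
apply: filterS (near_ptws_coord x (r, 0%N)) => g /= gr.
by exists r; rewrite ?gr.
Qed.

Lemma cube_embed_preimage_sumset S :
  cube_embed @^-1` sumset (encodes (fun r => r) `&` flags_in S)
                          (encodes (fun _ _ => false) `&` flags_in setT) = S.
Proof.
apply/seteqP; split => y.
- move=> [a [[_ a_rows] [r Sr ar]] [b [[_ b_rows] [s _ bs]] ab_y]].
  suff -> : y = r by [].
  apply: funext => n; have /= := congr1 (@^~ (r, n.+1)) ab_y.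
  by rewrite cantor_cube_addE (a_rows r) // (b_rows s) // addr0.
- move=> Sy.
  exists (fun k => if k.2 is n.+1 then y n else k.1 == y).
    split; last by exists y; rewrite //= eqxx.
    by split=> [r s /= /eqP-> /eqP->|r w n /= /eqP->].
  exists (fun k => if k.2 is n.+1 then false else k.1 == y).
    split; last by exists y; rewrite //= eqxx.
    by split=> [r s /= /eqP-> /eqP->|].
  apply: funext => -[w [|n]]; rewrite cantor_cube_addE /cube_embed /=.
    by case: (w == y).
  by rewrite addr0.
Qed.

Theorem proposition5p7 :
  exists G : topologicalZmodType,
    compact [set: G] /\ hausdorff_space G /\
    exists A B : set G,
      cech_analytic A /\ cech_analytic B /\ ~ cech_analytic (sumset A B).
Proof.
exists G; split; first exact: cantor_cube_compact.
split; first exact: cantor_cube_hausdorff.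
exists (encodes (fun r => r) `&` flags_in [set r | ~ coded_analytic r r]).
exists (encodes (fun _ _ => false) `&` flags_in setT).
have analytic_piece f S : cech_analytic (encodes f `&` flags_in S).
  exact: cech_analytic_closedI_open (closed_encodes f) (open_flags_in S).
split; first exact: analytic_piece.
split; first exact: analytic_piece.
move=> /(cech_analytic_preimage _ _ cube_embed_continuous).
by rewrite cube_embed_preimage_sumset; exact: diagonal_not_cech_analytic.
Qed.
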